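(* Assume (A1)–(A3) and $\alpha>1$, and let a value $A>0$ be given. Among all concentration profiles $C$ with $AUC[C]=A$, the one maximizing $LR_{max}[C]$ is $$C(t)=\begin{cases} c_{opt}, & 0\le t\le T,\\ 0,& t>T,\end{cases}\qquad T=\frac{A}{c_{opt}},$$ where $c_{opt}$ is the unique solution in $(0,\infty)$ of $k'(c)=\frac{k(c)-r}{c}$; and the maximal log-reduction attained is $$LR_{opt}=\frac{1}{\ln(10)}\cdot\frac{k(c_{opt})-r}{c_{opt}}\cdot A.$$
   Context: Let $r>0$ and let $k:[0,\infty)\to[0,\infty)$ satisfy: (A1) $k(0)=0$, $k$ is continuous and strictly increasing on $[0,\infty)$, and twice differentiable on $(0,\infty)$; (A2) $\lim_{c\to\infty}k(c)=k_{max}<\infty$; (A3) either (i) (concave case) $k''(c)<0$ for all $c>0$, or (ii) (sigmoidal case) there is $c_{infl}>0$ with $k''(c)>0$ for $0<c<c_{infl}$ and $k''(c)<0$ for $c>c_{infl}$. Set $\alpha=k_{max}/r$. A concentration profile is a non-negative function $C\in L^1[0,\infty)$, with $AUC[C]=\int_0^\infty C(t)\,dt$. For $T\ge0$, $LR(T)=\frac{1}{\ln 10}\int_0^T[k(C(t))-r]\,dt$, and $LR_{max}[C]=\max_{T\ge0}LR(T)$. *)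

From HB Require Import structures.
From mathcomp Require Import all_boot all_order all_algebra.
From mathcomp Require Import all_classical all_reals all_analysis.
Set Implicit Arguments. Unset Strict Implicit. Unset Printing Implicit Defensive.
Import Order.TTheory GRing.Theory Num.Theory.
Import numFieldNormedType.Exports.
Local Open Scope classical_set_scope.
Local Open Scope ring_scope.

Section Defs.
Context {R : realType}.
Local Notation mu := (@lebesgue_measure R).

Definition profile (C : R -> R) : Prop :=
  (forall t, 0 <= t -> 0 <= C t) /\
  mu.-integrable `[0%R, +oo[ (fun t => (C t)%:E).

Definition AUC (C : R -> R) : \bar R :=
  (\int[mu]_(t in `[0%R, +oo[) (C t)%:E)%E.

Definition LR (k : R -> R) (r : R) (C : R -> R) (T : R) : R :=
  (ln 10)^-1 * Rintegral mu `[0%R, T] (fun t => k (C t) - r).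

(* LR_max[C] = max_{T >= 0} LR(T), rendered as the supremum (in \bar R);
   it coincides with the maximum whenever the maximum exists. *)
Definition LRmax (k : R -> R) (r : R) (C : R -> R) : \bar R :=
  ereal_sup [set (LR k r C T)%:E | T in `[0%R, +oo[].

Definition box (c T : R) (t : R) : R :=
  if (0 <= t) && (t <= T) then c else 0.

End Defs.

From HB Require Import structures.
From mathcomp Require Import all_boot all_order all_algebra.
From mathcomp Require Import all_classical all_reals all_analysis.
From mathcomp Require Import ring lra.
Import Order.TTheory GRing.Theory Num.Theory.
Import numFieldNormedType.Exports.
Local Open Scope classical_set_scope.
Local Open Scope ring_scope.
Set Implicit Arguments. Unset Strict Implicit.

(* The slope [(k c - r) / c] of the chord from [(0, -r)] to [(c, k c)] attains its maximum [s]
   at some [copt], so [k c - r <= s c] for [c >= 0] and [copt] is a tangency point,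
   [k'(copt) = (k copt - r) / copt]. Tangency points are unique because
   [h c = c k'(c) - k c + r] has derivative [c k''(c)]: [h] is positive on the convex part of
   [k] and strictly decreasing on the concave part.
   Hence [int_0^T (k (C t) - r) dt <= s int_0^T C <= s A] for every profile, with equality for
   the box of height [copt] and width [A / copt]. Conversely, if a profile reaches [s A], the
   supremum over [T] is attained (a line [a c - r / 2] still dominates [k c - r], so the
   integral eventually turns negative), and equality in both inequalities forces [C = copt]
   a.e. on [[0, T]] and [C = 0] a.e. beyond [T]. *)

Section RealFunctions.
Variable R : realType.

Lemma derivable_is_derive1 (f : R -> R) (x : R) :
  derivable f x 1 -> is_derive x 1 f (derive1 f x).
Proof. by move=> df; rewrite derive1E; exact: derivableP. Qed.

Lemma is_derive1_val (f : R -> R) (x df : R) : is_derive x 1 f df -> derive1 f x = df.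
Proof. by move=> fd; rewrite derive1E (@derive_val _ _ _ _ _ _ _ fd). Qed.

Lemma is_derive_mulr (s x : R) : is_derive x 1 (fun y => s * y) s.
Proof.
by have := is_deriveZ s (is_derive_id x (1 : R)); rewrite /GRing.scale /= mulr1.
Qed.

Lemma ln10_gt0 : 0 < ln (10 : R).
Proof. by rewrite ln_gt0 // ltr1n. Qed.

Variable f : R -> R.

Lemma cvg_pinfty_exists_gt (l a : R) : f x @[x --> +oo] --> l -> a < l ->
  exists2 c, 0 < c & a < f c.
Proof.
move=> f_cvg a_lt_l.
have : \forall x \near +oo, 0 < x /\ a < f x.
  near=> x; split; first by near: x; apply: nbhs_pinfty_gt; exact: num_real.
  have : `|l - f x| < l - a.
    by near: x; move/cvgrPdist_lt: f_cvg; apply; rewrite subr_gt0.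
  move=> /(le_lt_trans (ler_norm _)); lra.
case=> M [_ HM].
have /HM[] : M < `|M| + 1 by rewrite (le_lt_trans (ler_norm M)) // ltrDl.
by exists (`|M| + 1).
Unshelve. all: by end_near. Qed.

Lemma continuous_at0_exists_lt (eps : R) :
  {within `[0%R, +oo[, continuous f} -> f 0 < eps -> exists2 d, 0 < d & f d < eps.
Proof.
move=> /continuous_within_itvcyP[_ f_cont0] f0_lt.
move/cvgrPdist_lt: f_cont0 => /(_ (eps - f 0)); rewrite subr_gt0 => /(_ f0_lt).
case=> d /= d_gt0 near_f0; have d2_gt0 : 0 < d / 2 by rewrite divr_gt0.
exists (d / 2) => //.
have : `|0 - d / 2| < d by rewrite sub0r normrN gtr0_norm //; lra.
move=> /near_f0 /(_ d2_gt0); rewrite distrC => /(le_lt_trans (ler_norm _)); lra.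
Qed.

Lemma continuous_chord_slope (r x : R) : 0 < x -> derivable f x 1 ->
  {for x, continuous (fun c => (f c - r) / c)}.
Proof.
move=> x_gt0 df; apply: continuousM.
  apply: continuousB; last exact: cst_continuous.
  exact/differentiable_continuous/derivable1_diffP.
by apply: (@continuousV _ _ id); [rewrite gt_eqF | move=> ?; apply].
Qed.

Hypothesis f_incr : forall x y, 0 <= x -> x < y -> f x < f y.

Lemma incr_le x y : 0 <= x -> x <= y -> f x <= f y.
Proof. by move=> x_ge0; rewrite le_eqVlt => /predU1P[->|/(f_incr x_ge0)/ltW]. Qed.

Lemma incr_lt_lim (l : R) : f x @[x --> +oo] --> l -> forall x, 0 <= x -> f x < l.
Proof.
move=> f_cvg x x_ge0.
have x1_ge0 : 0 <= x + 1 by rewrite addr_ge0.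
apply: (lt_le_trans (f_incr x_ge0 (_ : x < x + 1))); first by rewrite ltrDl.
rewrite -(cvg_lim _ f_cvg) //; apply: limr_ge; first by apply/cvg_ex; exists l.
near=> y; apply/ltW/f_incr => //; near: y; apply: nbhs_pinfty_gt; exact: num_real.
Unshelve. all: by end_near. Qed.

End RealFunctions.

Section Tangency.
Variables (R : realType) (k : R -> R) (r : R).

Lemma derive1_eq_slope_at_max (s c : R) : 0 < c ->
  (forall x, 0 < x -> derivable k x 1) ->
  (forall x, 0 < x -> k x - s * x <= k c - s * c) -> derive1 k c = s.
Proof.
move=> c_gt0 dk cmax.
have dks (x : R) : 0 < x -> is_derive x 1 (fun y => k y - s * y) (derive1 k x - s).
  move=> x_gt0; apply: is_deriveB; last exact: is_derive_mulr.
  exact: derivable_is_derive1 (dk x x_gt0).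
have dks_c0 : is_derive c 1 (fun y => k y - s * y) 0.
  apply: (@derive1_at_max _ _ 0 (c + 1)); first lra.
  - by move=> t; rewrite in_itv /= => /andP[t_gt0 _]; case: (dks t t_gt0).
  - by rewrite in_itv /=; apply/andP; split => //; lra.
  - by move=> t; rewrite in_itv /= => /andP[t_gt0 _]; exact: cmax.
have := is_derive1_val (dks c c_gt0); rewrite (is_derive1_val dks_c0).
by move/eqP; rewrite eq_sym subr_eq0 => /eqP.
Qed.

Lemma supporting_line_tangent (s c : R) : (forall x, 0 < x -> derivable k x 1) ->
  (forall x, 0 <= x -> k x - r <= s * x) ->
  0 < c -> k c - r = s * c -> derive1 k c = (k c - r) / c.
Proof.
move=> dk k_le c_gt0 k_c; rewrite k_c mulfK ?gt_eqF //.
apply: derive1_eq_slope_at_max => // x x_gt0.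
by have := k_le x (ltW x_gt0); lra.
Qed.

Definition tangency_gap (c : R) := c * derive1 k c - k c + r.

Lemma is_derive_tangency_gap (c : R) : derivable k c 1 -> derivable (derive1 k) c 1 ->
  is_derive c 1 tangency_gap (c * derive1 (derive1 k) c).
Proof.
move=> dk dk'.
have dprod : is_derive c 1 ((id : R -> R) * derive1 k)
    (c *: derive1 (derive1 k) c + derive1 k c *: 1).
  exact: is_deriveM (is_derive_id c 1) (derivable_is_derive1 dk').
have -> : tangency_gap = (id : R -> R) * derive1 k - k + cst r.
  by apply/funext => x; rewrite /tangency_gap.
apply: is_derive_eq; first exact: is_deriveD (is_deriveB dprod (derivable_is_derive1 dk))
  (is_derive_cst r c 1).
by rewrite /GRing.scale /=; ring.
Qed.

Hypothesis r_gt0 : 0 < r.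
Hypothesis k0 : k 0 = 0.
Hypothesis k_cont : {within `[0%R, +oo[, continuous k}.
Hypothesis k_der : forall c, 0 < c -> derivable k c 1 /\ derivable (derive1 k) c 1.

Lemma tangency_gap_decr (L : R) : 0 <= L -> (forall c, L < c -> derive1 (derive1 k) c < 0) ->
  forall x y, L < x -> x < y -> tangency_gap y < tangency_gap x.
Proof.
move=> L_ge0 k''_lt0 x y Lx xy.
have gap' (z : R) : L < z -> is_derive z 1 tangency_gap (z * derive1 (derive1 k) z).
  by move=> Lz; have [] := k_der (le_lt_trans L_ge0 Lz); exact: is_derive_tangency_gap.
apply: (@ltr0_derive1_decr _ _ x y) => //.
- by move=> z; rewrite in_itv /= => /andP[xz _]; case: (gap' z (lt_trans Lx xz)).
- move=> z; rewrite in_itv /= => /andP[xz _]; have Lz := lt_trans Lx xz.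
  rewrite (is_derive1_val (gap' z Lz)) pmulr_rlt0 ?k''_lt0 //.
  exact: le_lt_trans L_ge0 Lz.
- apply: derivable_within_continuous => z; rewrite in_itv /= => /andP[xz _].
  by case: (gap' z (lt_le_trans Lx xz)).
Qed.

(* Two mean value steps give [k c = c k'(xi)] and [k'(c) - k'(xi) = k''(eta) (c - xi) > 0]
   on the convex part, so the gap is [c (k'(c) - k'(xi)) + r > 0]. *)
Lemma tangency_gap_gt0 (cinfl : R) :
  (forall c, 0 < c -> c < cinfl -> 0 < derive1 (derive1 k) c) ->
  forall c, 0 < c -> c <= cinfl -> 0 < tangency_gap c.
Proof.
move=> k''_gt0 c c_gt0 c_le.
have dk (z : R) : z \in `]0, c[ -> is_derive z 1 k (derive1 k z).
  by rewrite in_itv /= => /andP[z_gt0 _]; exact: derivable_is_derive1 (k_der z_gt0).1.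
have ck : {within `[0, c], continuous k}.
  by apply: continuous_subspaceW k_cont => z /=; rewrite !in_itv /= => /andP[-> _].
have [xi + E1] := MVT c_gt0 dk ck.
rewrite in_itv /= => /andP[xi_gt0 xi_lt].
have dk' (z : R) : z \in `]xi, c[ -> is_derive z 1 (derive1 k) (derive1 (derive1 k) z).
  rewrite in_itv /= => /andP[xz _].
  exact: derivable_is_derive1 (k_der (lt_trans xi_gt0 xz)).2.
have ck' : {within `[xi, c], continuous (derive1 k)}.
  apply: derivable_within_continuous => z; rewrite in_itv /= => /andP[xz _].
  exact: (k_der (lt_le_trans xi_gt0 xz)).2.
have [eta + E2] := MVT xi_lt dk' ck'.
rewrite in_itv /= => /andP[xi_eta eta_c].
have k''_eta := k''_gt0 eta (lt_trans xi_gt0 xi_eta) (lt_le_trans eta_c c_le).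
have gapE : tangency_gap c = c * (derive1 (derive1 k) eta * (c - xi)) + r.
  by rewrite /tangency_gap -E2; move: E1; rewrite k0 !subr0 => ->; ring.
by rewrite gapE addr_gt0 // !mulr_gt0 // subr_gt0.
Qed.

Lemma tangency_gap_eq0 (c : R) : 0 < c -> derive1 k c = (k c - r) / c -> tangency_gap c = 0.
Proof. by move=> c_gt0 c_tangent; rewrite /tangency_gap c_tangent mulrC divfK ?gt_eqF //; ring. Qed.

Definition concave_or_sigmoidal :=
  (forall c, 0 < c -> derive1 (derive1 k) c < 0) \/
  (exists cinfl, 0 < cinfl /\
     (forall c, 0 < c -> c < cinfl -> 0 < derive1 (derive1 k) c) /\
     (forall c, cinfl < c -> derive1 (derive1 k) c < 0)).

Lemma tangency_point_unique : concave_or_sigmoidal ->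
  forall c1 c2, 0 < c1 -> 0 < c2 ->
  derive1 k c1 = (k c1 - r) / c1 -> derive1 k c2 = (k c2 - r) / c2 -> c1 = c2.
Proof.
move=> k_shape c1 c2 c1_gt0 c2_gt0 /(tangency_gap_eq0 c1_gt0) g1 /(tangency_gap_eq0 c2_gt0) g2.
have unique_above (L : R) : 0 <= L -> (forall c, L < c -> derive1 (derive1 k) c < 0) ->
    L < c1 -> L < c2 -> c1 = c2.
  move=> L_ge0 k''_lt0 Lc1 Lc2; have decr := tangency_gap_decr L_ge0 k''_lt0.
  case: (ltgtP c1 c2) => // [c12|c21].
    by have := decr _ _ Lc1 c12; rewrite g1 g2 ltxx.
  by have := decr _ _ Lc2 c21; rewrite g1 g2 ltxx.
case: k_shape => [k''_lt0|[cinfl [cinfl_gt0 [k''_gt0 k''_lt0]]]].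
  by apply: (unique_above 0) => // c c_gt0; exact: k''_lt0.
have above (c : R) : 0 < c -> tangency_gap c = 0 -> cinfl < c.
  move=> c_gt0 gc; rewrite ltNge; apply/negP => c_le.
  by have := tangency_gap_gt0 k''_gt0 c_gt0 c_le; rewrite gc ltxx.
exact: unique_above (ltW cinfl_gt0) k''_lt0 (above c1 c1_gt0 g1) (above c2 c2_gt0 g2).
Qed.

Lemma supporting_line_contact_unique (s copt : R) : concave_or_sigmoidal ->
  (forall x, 0 <= x -> k x - r <= s * x) -> 0 < copt -> k copt - r = s * copt ->
  forall c, 0 <= c -> k c - r = s * c -> c = copt.
Proof.
move=> k_shape k_le copt_gt0 k_copt c.
have dk (x : R) : 0 < x -> derivable k x 1 by move=> /k_der[].
rewrite le_eqVlt => /predU1P[<-|c_gt0 k_c].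
  by rewrite k0 mulr0 sub0r => /eqP; rewrite oppr_eq0 gt_eqF.
apply: tangency_point_unique => //; exact: supporting_line_tangent k_le _ _.
Qed.

End Tangency.

Section ChordSlope.
Variables (R : realType) (k : R -> R) (r kmax : R).
Hypothesis r_gt0 : 0 < r.
Hypothesis k0 : k 0 = 0.
Hypothesis k_cont : {within `[0%R, +oo[, continuous k}.
Hypothesis k_incr : forall x y, 0 <= x -> x < y -> k x < k y.
Hypothesis k_der : forall c, 0 < c -> derivable k c 1.
Hypothesis k_cvg : k x @[x --> +oo] --> kmax.
Hypothesis r_lt_kmax : r < kmax.

(* With [g c = (k c - r) / c]: [g < 0] below [d] (where [k d < r]) and, beyond [b],
   [g c < (kmax - r) / b < g c0]; so the maximum of [g] over the compact [[d, b]] is global. *)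
Lemma chord_slope_max : exists copt s, [/\ 0 < copt, 0 < s, k copt - r = s * copt &
  forall c, 0 <= c -> k c - r <= s * c].
Proof.
have [c0 c0_gt0 r_lt_kc0] := cvg_pinfty_exists_gt k_cvg r_lt_kmax.
have [d d_gt0 kd_lt_r] : exists2 d, 0 < d & k d < r.
  by apply: continuous_at0_exists_lt; rewrite ?k0.
have d_lt_c0 : d < c0.
  by rewrite ltNge; apply/negP => /(incr_le k_incr (ltW c0_gt0)); lra.
pose g c := (k c - r) / c.
have m_gt0 : 0 < g c0 by rewrite divr_gt0 // subr_gt0.
pose b := c0 + (kmax - r) / g c0.
have c0_le_b : c0 <= b by rewrite lerDl ltW // divr_gt0 // subr_gt0.
have kmax_lt : kmax - r < g c0 * b.
  have : g c0 * ((kmax - r) / g c0) = kmax - r by rewrite mulrC divfK // gt_eqF.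
  have : 0 < g c0 * c0 by rewrite mulr_gt0.
  rewrite /b mulrDr; lra.
have g_cont : {within `[d, b], continuous g}.
  apply: continuous_in_subspaceT => x; rewrite inE /= in_itv /= => /andP[dx _].
  have x_gt0 := lt_le_trans d_gt0 dx.
  exact: continuous_chord_slope x_gt0 (k_der x_gt0).
have [copt + g_max] := EVT_max (le_trans (ltW d_lt_c0) c0_le_b) g_cont.
rewrite in_itv /= => /andP[d_le_copt copt_le_b].
have copt_gt0 := lt_le_trans d_gt0 d_le_copt.
have m_le_s : g c0 <= g copt by apply: g_max; rewrite in_itv /= (ltW d_lt_c0) c0_le_b.
exists copt, (g copt); split => //; first exact: lt_le_trans m_le_s.
  by rewrite /g divfK // gt_eqF.
move=> c; rewrite le_eqVlt => /predU1P[<-|c_gt0]; first by rewrite k0 mulr0 sub0r oppr_le0 ltW.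
have s_c_gt0 : 0 < g copt * c by rewrite mulr_gt0 // (lt_le_trans m_gt0).
case: (ltP c d) => [c_lt_d|d_le_c].
  by have := k_incr (ltW c_gt0) c_lt_d; lra.
case: (leP c b) => [c_le_b|b_lt_c].
  have := g_max c; rewrite in_itv /= d_le_c c_le_b => /(_ isT).
  by rewrite {1}/g ler_pdivrMr // mulrC.
have := incr_lt_lim k_incr k_cvg (ltW c_gt0).
have b_ge0 : 0 <= b := le_trans (ltW c0_gt0) c0_le_b.
have : g c0 * b < g copt * c.
  by apply: (le_lt_trans (ler_wpM2r b_ge0 m_le_s)); rewrite ltr_pM2l // (lt_le_trans m_gt0).
lra.
Qed.

End ChordSlope.

Section LebesgueFacts.
Variable R : realType.
Local Notation mu := (@lebesgue_measure R).

Lemma lebesgue_measure_itvcc (a b : R) : a <= b -> mu `[a, b] = (b - a)%:E.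
Proof.
move=> ab; have /= -> := lebesgue_measure_itv `[a, b].
case: ifP => /=; first by rewrite EFinB.
by move/negbT; rewrite lte_fin -leNgt => ba; rewrite (@le_anti _ _ a b) ?ab ?subrr.
Qed.

Lemma lebesgue_measure_itvcc_lty (a b : R) : (mu `[a, b] < +oo)%E.
Proof. by have /= -> := lebesgue_measure_itv `[a, b]; case: ifP => // _; exact: ltry. Qed.

Lemma itvcc_sub_itvcy (T : R) : `[0%R, T] `<=` `[0%R, +oo[.
Proof. by move=> t /=; rewrite !in_itv /= => /andP[-> _]. Qed.

Lemma integrable_cst_itvcc (a b c : R) : mu.-integrable `[a, b] (EFin \o cst c).
Proof.
apply: measurable_bounded_integrable => //.
- exact: lebesgue_measure_itvcc_lty.
- by exists `|c|; split; [exact: num_real | move=> M HM x _ /=; apply: ltW].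
Qed.

Lemma Rintegral_eq0_ae (D : set R) (f : R -> R) : measurable D ->
  mu.-integrable D (EFin \o f) -> (forall t, D t -> 0 <= f t) ->
  \int[mu]_(t in D) f t = 0 -> {ae mu, forall t, D t -> f t = 0}.
Proof.
move=> mD intf f_ge0 int0.
have mf := (integrableP _ _ _ intf).1.
have /(ae_eq_integral_abs mu mD mf).1 : (\int[mu]_(t in D) `|(f t)%:E|)%E = 0%E.
  under eq_integral => t /[!inE] Dt do rewrite gee0_abs ?lee_fin ?f_ge0 //.
  by rewrite -(fineK (integrable_fin_num _ intf)) //; move: int0; rewrite /Rintegral => ->.
move=> f_ae; apply: (@filterS _ _ (ae_filter_ringOfSetsType mu) _ _ _ f_ae) => t ft Dt.
by have /= [] := ft Dt.
Qed.

Lemma Rintegral_itvcc_ae_cst (f : R -> R) (a b c : R) : a <= b ->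
  measurable_fun `[a, b] f -> {ae mu, forall t, `[a, b]%classic t -> f t = c} ->
  \int[mu]_(t in `[a, b]) f t = c * (b - a).
Proof.
move=> ab mf f_ae; rewrite /Rintegral (@ae_eq_integral _ _ _ mu _ (EFin \o cst c)) //.
- have /= -> := integral_cst mu (measurable_itv `[a, b]) c%:E.
  by have /= -> := lebesgue_measure_itvcc ab.
- exact/measurable_realfun.measurable_EFinP.
- by apply/measurable_realfun.measurable_EFinP; exact: measurable_cst.
- apply: (@filterS _ _ (ae_filter_ringOfSetsType mu) _ _ _ f_ae) => t ft Dt.
  by rewrite /= ft.
Qed.

End LebesgueFacts.

Section Profiles.
Variables (R : realType) (k : R -> R) (r kmax : R).
Local Notation mu := (@lebesgue_measure R).
Hypothesis k0 : k 0 = 0.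
Hypothesis k_incr : forall x y, 0 <= x -> x < y -> k x < k y.
Hypothesis k_lt_kmax : forall x, 0 <= x -> k x < kmax.

Lemma profile_integrableS (C : R -> R) (D : set R) :
  measurable D -> D `<=` `[0%R, +oo[ -> profile C -> mu.-integrable D (EFin \o C).
Proof. by move=> mD sD pC; apply: integrableS pC.2. Qed.

Lemma profile_Rintegral_le (C : R -> R) (A : R) (D : set R) :
  measurable D -> D `<=` `[0%R, +oo[ -> profile C -> AUC C = A%:E ->
  \int[mu]_(t in D) C t <= A.
Proof.
move=> mD sD pC AUC_A.
rewrite /Rintegral -lee_fin fineK; last exact: integrable_fin_num (profile_integrableS mD sD pC).
rewrite -AUC_A; apply: ge0_subset_integral => //; first exact: (integrableP _ _ _ pC.2).1.
by move=> x /=; rewrite in_itv /= andbT => x_ge0; rewrite lee_fin pC.1.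
Qed.

Lemma profile_ae_eq0_beyond (C : R -> R) (A T : R) : profile C -> AUC C = A%:E ->
  0 <= T -> \int[mu]_(t in `[0%R, T]) C t = A -> {ae mu, forall t, `]T, +oo[%classic t -> C t = 0}.
Proof.
move=> pC AUC_A T_ge0 int_T.
have tail_sub : `]T, +oo[ `<=` `[0%R, +oo[.
  by move=> t /=; rewrite !in_itv /= !andbT => /ltW; exact: le_trans.
have itv_split : `[0%R, +oo[%classic = `[0%R, T]%classic `|` `]T, +oo[%classic :> set R.
  by rewrite -(@itv_bndbnd_setU _ _ (BLeft 0) (BRight T) (BInfty _ false)) // bnd_simp.
have disj : [disjoint `[0%R, T]%classic & `]T, +oo[%classic :> set R].
  apply/disj_set2P; rewrite -subset0 => t [] /=; rewrite !in_itv /= andbT.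
  by move=> /andP[_ tT] Tt; move: (lt_le_trans Tt tT); rewrite ltxx.
have int_all : \int[mu]_(t in `[0%R, +oo[) C t = A by rewrite /Rintegral -/(AUC C) AUC_A.
apply: Rintegral_eq0_ae => //.
- exact: profile_integrableS tail_sub pC.
- by move=> t /tail_sub; rewrite /= in_itv /= andbT => /pC.1.
move: int_all; rewrite itv_split Rintegral_setU // -?itv_split ?int_T; first lra.
exact: pC.2.
Qed.

(* [k] is only known to be monotone on [[0, +oo[]; composing with [max x 0] extends it to
   a monotone, hence measurable, function on the whole line. *)
Lemma measurable_fun_kC (C : R -> R) (D : set R) :
  measurable D -> D `<=` `[0%R, +oo[ -> profile C ->
  measurable_fun D (fun t => k (C t) - r).
Proof.
move=> mD sD [C_ge0 intC].
have mC : measurable_fun D C.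
  apply/measurable_realfun.measurable_EFinP.
  exact: measurable_funS (integrableP _ _ _ intC).1.
apply: measurable_realfun.measurable_funB => //.
apply: (eq_measurable_fun (fun t => k (Num.max (C t) 0))).
  by move=> t /[!inE] /sD /=; rewrite in_itv /= andbT => t_ge0; rewrite max_l // C_ge0.
have k_max_nd : nondecreasing_fun (fun x => k (Num.max x 0)).
  move=> x y xy /=; apply: (incr_le k_incr); first by rewrite le_max lexx orbT.
  by rewrite ge_max !le_max xy lexx !orbT.
exact: measurableT_comp (measurable_realfun.nondecreasing_measurable measurableT k_max_nd) mC.
Qed.

Lemma integrable_kC (C : R -> R) (a b : R) : 0 <= a -> profile C ->
  mu.-integrable `[a, b] (EFin \o (fun t => k (C t) - r)).
Proof.
move=> a_ge0 pC; apply: measurable_bounded_integrable => //.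
- exact: lebesgue_measure_itvcc_lty.
- apply: measurable_fun_kC => // t /=; rewrite !in_itv /= => /andP[at_ _].
  by rewrite (le_trans a_ge0 at_).
exists (kmax + `|r|); split; first exact: num_real.
move=> M M_gt x /=; rewrite in_itv /= => /andP[ax _]; apply/ltW/(le_lt_trans _ M_gt).
have Cx_ge0 : 0 <= C x by apply: pC.1; exact: le_trans a_ge0 ax.
have kCx_ge0 : 0 <= k (C x) by rewrite -k0 incr_le.
apply: (le_trans (ler_normB _ _)); rewrite ger0_norm // lerD2r.
exact/ltW/k_lt_kmax.
Qed.

Lemma Rintegral_kC_le_affine (C : R -> R) (A a b T : R) :
  (forall c, 0 <= c -> k c - r <= a * c - b) -> 0 <= a ->
  profile C -> AUC C = A%:E -> 0 <= T ->
  \int[mu]_(t in `[0%R, T]) (k (C t) - r) <= a * A - b * T.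
Proof.
move=> k_le a_ge0 pC AUC_A T_ge0.
have intC := profile_integrableS (measurable_itv `[0%R, T]) (@itvcc_sub_itvcy _ T) pC.
have intaC : mu.-integrable `[0%R, T] (EFin \o (fun t => a * C t)).
  by apply: eq_integrable (integrableZl _ a intC) => // t _.
apply: (@le_trans _ _ (\int[mu]_(t in `[0%R, T]) (a * C t - b))).
  apply: le_Rintegral => //.
  - exact: integrable_kC.
  - by apply: eq_integrable (integrableB _ intaC (integrable_cst_itvcc 0 T b)) => // t _.
  - by move=> t /=; rewrite in_itv /= => /andP[t_ge0 _]; apply: k_le; exact: pC.1.
rewrite RintegralB // ?integrable_cst_itvcc // RintegralZl // Rintegral_cst //.
have /= -> := lebesgue_measure_itvcc T_ge0; rewrite /= subr0 lerD2r ler_wpM2l //.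
exact: profile_Rintegral_le (@itvcc_sub_itvcy _ T) pC AUC_A.
Qed.

Lemma LRmax_le_slope (C : R -> R) (A s : R) :
  (forall c, 0 <= c -> k c - r <= s * c) -> 0 <= s -> profile C -> AUC C = A%:E ->
  (LRmax k r C <= ((ln 10)^-1 * s * A)%:E)%E.
Proof.
move=> k_le s_ge0 pC AUC_A.
apply: ge_ereal_sup => _ [T /= T_ge0 <-]; rewrite lee_fin /LR -mulrA.
rewrite ler_pM2l ?invr_gt0 ?ln10_gt0 //.
move: T_ge0; rewrite in_itv /= andbT => T_ge0.
have := @Rintegral_kC_le_affine C A s 0 T; rewrite mul0r subr0; apply => //.
by move=> c c_ge0; rewrite subr0 k_le.
Qed.

End Profiles.

Section Box.
Variable R : realType.
Local Notation mu := (@lebesgue_measure R).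

Lemma box_restrict (c T t : R) :
  (box c T t)%:E = ((EFin \o cst c) \_ `[0%R, T]) t.
Proof.
rewrite patchE /box; case: (boolP (0 <= t <= T)) => h.
  by rewrite mem_set //= in_itv.
by rewrite memNset //= in_itv; exact/negP.
Qed.

Lemma profile_box (c T : R) : 0 <= c -> profile (box c T).
Proof.
move=> c_ge0; split; first by move=> t _; rewrite /box; case: ifP.
have : mu.-integrable `[0%R, +oo[ ((EFin \o cst c) \_ `[0%R, T]).
  by apply/integrable_restrict; rewrite ?setIidr ?integrable_cst_itvcc //; exact: itvcc_sub_itvcy.
by apply: eq_integrable => // t _; rewrite box_restrict.
Qed.

Lemma AUC_box (c T : R) : 0 <= T -> AUC (box c T) = (c * T)%:E.
Proof.
move=> T_ge0; rewrite /AUC; under eq_integral => t _ do rewrite box_restrict.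
rewrite -integral_mkcondr setIidr; last exact: itvcc_sub_itvcy.
have /= -> := integral_cst mu (measurable_itv `[0%R, T]) c%:E.
by have /= -> := lebesgue_measure_itvcc T_ge0; rewrite subr0.
Qed.

Lemma LR_box (k : R -> R) (r c T : R) : 0 <= T ->
  LR k r (box c T) T = (ln 10)^-1 * ((k c - r) * T).
Proof.
move=> T_ge0; rewrite /LR (@eq_Rintegral _ _ _ _ _ (fun=> k c - r)); last first.
  by move=> t /[!inE] /=; rewrite in_itv /= /box => ->.
by rewrite Rintegral_cst //; have /= -> := lebesgue_measure_itvcc T_ge0; rewrite subr0.
Qed.

End Box.

Section Optimality.
Variables (R : realType) (k : R -> R) (r kmax : R).
Local Notation mu := (@lebesgue_measure R).
Hypothesis r_gt0 : 0 < r.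
Hypothesis k0 : k 0 = 0.
Hypothesis k_cont : {within `[0%R, +oo[, continuous k}.
Hypothesis k_incr : forall x y, 0 <= x -> x < y -> k x < k y.
Hypothesis k_lt_kmax : forall x, 0 <= x -> k x < kmax.

Lemma LRmax_box (A s copt : R) : (forall c, 0 <= c -> k c - r <= s * c) -> 0 <= s ->
  0 < copt -> k copt - r = s * copt -> 0 <= A ->
  LRmax k r (box copt (A / copt)) = ((ln 10)^-1 * s * A)%:E.
Proof.
move=> k_le s_ge0 copt_gt0 k_copt A_ge0.
have T_ge0 : 0 <= A / copt by rewrite divr_ge0 // ltW.
apply/le_anti/andP; split.
  apply: (LRmax_le_slope k0 k_incr k_lt_kmax k_le s_ge0); first exact/profile_box/ltW.
  by rewrite AUC_box // mulrC divfK // gt_eqF.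
apply: ereal_sup_ubound; exists (A / copt); first by rewrite /= in_itv /= T_ge0.
by rewrite LR_box // k_copt; congr EFin; field; rewrite !gt_eqF // ln10_gt0.
Qed.

Lemma LR_at0 (C : R -> R) : LR k r C 0 = 0.
Proof. by rewrite /LR set_itv1 Rintegral_set1 mulr0. Qed.

(* A line through [(0, -r/2)] still dominates [k - r]: steepen the slope by [r / (2 d)]
   where [k d < r / 2]. *)
Lemma affine_majorant (s : R) : (forall c, 0 <= c -> k c - r <= s * c) -> 0 <= s ->
  exists2 a, 0 <= a & forall c, 0 <= c -> k c - r <= a * c - r / 2.
Proof.
move=> k_le s_ge0.
have [d d_gt0 kd_lt] : exists2 d, 0 < d & k d < r / 2.
  by apply: continuous_at0_exists_lt; rewrite // k0 divr_gt0.
have rd_ge0 : 0 <= r / (2 * d) by rewrite divr_ge0 // ?mulr_ge0 // ltW.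
exists (s + r / (2 * d)) => [|c c_ge0]; first by rewrite addr_ge0.
case: (ltP c d) => [c_lt_d|d_le_c].
  have := k_incr c_ge0 c_lt_d; have : 0 <= (s + r / (2 * d)) * c.
    by rewrite mulr_ge0 // addr_ge0.
  lra.
have : r / (2 * d) * d = r / 2 by field; rewrite gt_eqF.
have : r / (2 * d) * d <= r / (2 * d) * c by rewrite ler_wpM2l.
have := k_le c c_ge0; rewrite mulrDl; lra.
Qed.

(* Beyond some [B] the cumulated log-reduction is non-positive, so the supremum over
   [T >= 0] is a maximum over the compact [[0, B]]. *)
Lemma LRmax_attained (C : R -> R) (A s : R) :
  (forall c, 0 <= c -> k c - r <= s * c) -> 0 <= s -> 0 <= A ->
  profile C -> AUC C = A%:E ->
  exists2 Ts, 0 <= Ts & LRmax k r C = (LR k r C Ts)%:E.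
Proof.
move=> k_le s_ge0 A_ge0 pC AUC_A.
have [a a_ge0 k_le_affine] := affine_majorant k_le s_ge0.
pose B := 2 * a * A / r.
have B_ge0 : 0 <= B by rewrite /B divr_ge0 ?mulr_ge0 // ltW.
have LR_le0 (T : R) : B <= T -> LR k r C T <= 0.
  move=> BT; have T_ge0 := le_trans B_ge0 BT.
  rewrite /LR pmulr_rle0 ?invr_gt0 ?ln10_gt0 //.
  apply: (le_trans (Rintegral_kC_le_affine k0 k_incr k_lt_kmax k_le_affine a_ge0 pC AUC_A T_ge0)).
  have : r / 2 * B = a * A by rewrite /B; field; rewrite gt_eqF.
  have : r / 2 * B <= r / 2 * T by rewrite ler_wpM2l // divr_ge0 // ltW.
  lra.
have intB : mu.-integrable `[0%R, B] (EFin \o (fun t => k (C t) - r)).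
  exact: (integrable_kC r k0 k_incr k_lt_kmax B (lexx 0) pC).
have [Ts + G_max] := EVT_max B_ge0 (parameterized_integral_continuous B_ge0 intB).
rewrite in_itv /= => /andP[Ts_ge0 Ts_le_B].
have LR_le_Ts (T : R) : 0 <= T -> LR k r C T <= LR k r C Ts.
  move=> T_ge0; case: (leP T B) => [T_le_B|B_lt_T].
    by rewrite /LR ler_pM2l ?invr_gt0 ?ln10_gt0 //; apply: G_max; rewrite in_itv /= T_ge0.
  apply: (le_trans (LR_le0 T (ltW B_lt_T))); rewrite -(LR_at0 C).
  by rewrite /LR ler_pM2l ?invr_gt0 ?ln10_gt0 //; apply: G_max; rewrite in_itv /= lexx.
exists Ts => //; apply/le_anti/andP; split.
  apply: ge_ereal_sup => _ [T /= + <-]; rewrite in_itv /= andbT => T_ge0.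
  by rewrite lee_fin LR_le_Ts.
by apply: ereal_sup_ubound; exists Ts => //=; rewrite in_itv /= Ts_ge0.
Qed.

(* Equality in [int_0^Ts (k (C t) - r) <= s int_0^Ts C <= s A] makes both steps tight. *)
Lemma slope_bound_tight_ae (C : R -> R) (A s copt Ts : R) :
  (forall c, 0 <= c -> k c - r <= s * c) -> 0 < s ->
  (forall c, 0 <= c -> k c - r = s * c -> c = copt) ->
  profile C -> AUC C = A%:E -> 0 <= Ts ->
  \int[mu]_(t in `[0%R, Ts]) (k (C t) - r) = s * A ->
  \int[mu]_(t in `[0%R, Ts]) C t = A /\ {ae mu, forall t, `[0%R, Ts]%classic t -> C t = copt}.
Proof.
move=> k_le s_gt0 k_eq pC AUC_A Ts_ge0 kC_eq.
have intC := profile_integrableS (measurable_itv _) (@itvcc_sub_itvcy _ Ts) pC.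
have intsC : mu.-integrable `[0%R, Ts] (EFin \o (fun t => s * C t)).
  by apply: eq_integrable (integrableZl _ s intC) => // t _.
have intkC := integrable_kC r k0 k_incr k_lt_kmax Ts (lexx 0) pC.
have C_eq : \int[mu]_(t in `[0%R, Ts]) C t = A.
  apply/le_anti/andP; split; first exact: profile_Rintegral_le (@itvcc_sub_itvcy _ Ts) pC AUC_A.
  rewrite -(ler_pM2l s_gt0) -RintegralZl // -kC_eq.
  apply: le_Rintegral => // t /=; rewrite in_itv /= => /andP[t_ge0 _].
  by apply: k_le; exact: pC.1.
have gap_ae : {ae mu, forall t, `[0%R, Ts]%classic t -> s * C t - (k (C t) - r) = 0}.
  apply: Rintegral_eq0_ae => //.
  - by apply: eq_integrable (integrableB _ intsC intkC) => // t _.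
  - by move=> t /=; rewrite in_itv /= => /andP[t_ge0 _]; rewrite subr_ge0 k_le // pC.1.
  - by rewrite RintegralB // RintegralZl // kC_eq C_eq subrr.
split => //; apply: (@filterS _ _ (ae_filter_ringOfSetsType mu) _ _ _ gap_ae) => t gap0 tTs.
apply: k_eq; first by move: tTs; rewrite /= in_itv /= => /andP[/pC.1].
by apply/esym/eqP; rewrite -subr_eq0 gap0.
Qed.

Lemma LRmax_eq_ae_box (C : R -> R) (A s copt : R) :
  (forall c, 0 <= c -> k c - r <= s * c) -> 0 < s -> 0 < copt ->
  (forall c, 0 <= c -> k c - r = s * c -> c = copt) -> 0 <= A ->
  profile C -> AUC C = A%:E -> LRmax k r C = ((ln 10)^-1 * s * A)%:E ->
  {ae mu, forall t, 0 <= t -> C t = box copt (A / copt) t}.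
Proof.
move=> k_le s_gt0 copt_gt0 k_eq A_ge0 pC AUC_A LRmax_eq.
have [Ts Ts_ge0 LRmax_Ts] := LRmax_attained k_le (ltW s_gt0) A_ge0 pC AUC_A.
have kC_eq : \int[mu]_(t in `[0%R, Ts]) (k (C t) - r) = s * A.
  have ln10_neq0 : (ln (10 : R))^-1 != 0 by rewrite invr_eq0 gt_eqF // ln10_gt0.
  have : (LR k r C Ts)%:E = ((ln 10)^-1 * s * A)%:E by rewrite -LRmax_Ts.
  by rewrite /LR -mulrA => -[] /(mulfI ln10_neq0).
have [C_eq C_ae] := slope_bound_tight_ae k_le s_gt0 k_eq pC AUC_A Ts_ge0 kC_eq.
have Ts_eq : Ts = A / copt.
  have := Rintegral_itvcc_ae_cst Ts_ge0 _ C_ae; rewrite C_eq subr0 => -> .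
  - by rewrite mulrAC divff ?mul1r // gt_eqF.
  - apply/measurable_realfun.measurable_EFinP.
    have := profile_integrableS (measurable_itv _) (@itvcc_sub_itvcy _ Ts) pC.
    by case/integrableP.
have tail_ae := profile_ae_eq0_beyond pC AUC_A Ts_ge0 C_eq.
apply: (filterS2 (ae_filter_ringOfSetsType mu) _ C_ae tail_ae) => t C_Ts C_tail t_ge0.
rewrite /box -Ts_eq t_ge0 /=; case: (leP t Ts) => [tTs|Tst].
  by apply: C_Ts; rewrite /= in_itv /= t_ge0.
by apply: C_tail; rewrite /= in_itv /= Tst.
Qed.

End Optimality.

Unset Implicit Arguments. Set Strict Implicit.

Theorem corollary1 (R : realType) (k : R -> R) (r kmax A : R) :
  0 < r ->
  (* (A1) *)
  k 0 = 0 ->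
  {within `[0%R, +oo[, continuous k} ->
  (forall x y, 0 <= x -> x < y -> k x < k y) ->
  (forall c, 0 < c -> derivable k c 1 /\ derivable (derive1 k) c 1) ->
  (* (A2) *)
  k x @[x --> +oo] --> kmax ->
  (* (A3) *)
  ((forall c, 0 < c -> derive1 (derive1 k) c < 0) \/
   (exists cinfl, 0 < cinfl /\
      (forall c, 0 < c -> c < cinfl -> 0 < derive1 (derive1 k) c) /\
      (forall c, cinfl < c -> derive1 (derive1 k) c < 0))) ->
  (* alpha > 1 *)
  1 < kmax / r ->
  0 < A ->
  exists copt : R,
    [/\ 0 < copt /\ derive1 k copt = (k copt - r) / copt /\
        (forall c, 0 < c -> derive1 k c = (k c - r) / c -> c = copt),
        profile (box copt (A / copt)) /\ AUC (box copt (A / copt)) = A%:E,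
        LRmax k r (box copt (A / copt)) =
          ((ln 10)^-1 * ((k copt - r) / copt) * A)%:E,
        (forall C, profile C -> AUC C = A%:E ->
           (LRmax k r C <= LRmax k r (box copt (A / copt)))%E) &
        (forall C, profile C -> AUC C = A%:E ->
           LRmax k r C = LRmax k r (box copt (A / copt)) ->
           {ae (@lebesgue_measure R), forall t,
              0 <= t -> C t = box copt (A / copt) t})].
Proof.
move=> r_gt0 k0 k_cont k_incr k_der k_cvg k_shape alpha_gt1 A_gt0.
have r_lt_kmax : r < kmax by move: alpha_gt1; rewrite ltr_pdivlMr // mul1r.
have k_lt_kmax : forall x, 0 <= x -> k x < kmax := incr_lt_lim k_incr k_cvg.
have dk c : 0 < c -> derivable k c 1 by move=> /k_der[].
have [copt [s [copt_gt0 s_gt0 k_copt k_le]]] :=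
  chord_slope_max r_gt0 k0 k_cont k_incr dk k_cvg r_lt_kmax.
have sE : (k copt - r) / copt = s by rewrite k_copt mulfK // gt_eqF.
have copt_tangent := supporting_line_tangent dk k_le copt_gt0 k_copt.
have contact_copt :=
  supporting_line_contact_unique r_gt0 k0 k_cont k_der k_shape k_le copt_gt0 k_copt.
have LR_opt := LRmax_box k0 k_incr k_lt_kmax k_le (ltW s_gt0) copt_gt0 k_copt (ltW A_gt0).
exists copt; split.
- split=> //; split=> // c c_gt0 c_tangent.
  exact: (tangency_point_unique r_gt0 k0 k_cont k_der k_shape c_gt0 copt_gt0).
- by split; [exact/profile_box/ltW | rewrite AUC_box ?divr_ge0 ?ltW // mulrC divfK ?gt_eqF].
- by rewrite LR_opt sE.
- move=> C pC AUC_C; rewrite LR_opt.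
  by apply: (LRmax_le_slope k0 k_incr k_lt_kmax k_le (ltW s_gt0) pC).
- move=> C pC AUC_C; rewrite LR_opt => LR_C.
  apply: (LRmax_eq_ae_box r_gt0 k0 k_cont k_incr k_lt_kmax k_le s_gt0 copt_gt0 contact_copt)
    => //; exact: ltW.
Qed.
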